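(* Let $C\in\mathcal C_n$, $A=\Xi^{-1}(C)$, and let $L$ be the $n\times n$ matrix with $L_{ij}=\sum_{k=1}^n kA_{i,j,k}$. Let $\Sigma(L)_{i,j}=\sum_{a=1}^i\sum_{b=1}^j L_{ab}$ and $\rho(C)=\sum_{0\le i,j,k\le n}C_{i,j,k}$. Then $$\rho(C)+\sum_{1\le i,j\le n}\Sigma(L)_{i,j}=\frac{n^2(n+1)^3}{4}.$$
   Context: Let $[n]=\{1,\dots,n\}$, $[0,n]=\{0,\dots,n\}$. A corner-sum hypermatrix of order $n$ is an integer array $C=(C_{i,j,k})_{i,j,k\in[0,n]}$ such that for all $i,j\in[0,n]$: $C_{i,j,0}=C_{i,0,j}=C_{0,i,j}=0$, $C_{i,j,n}=C_{i,n,j}=C_{n,i,j}=ij$, and for all $k\in[n]$ each of $C_{i,j,k}-C_{i,j,k-1}$, $C_{i,k,j}-C_{i,k-1,j}$, $C_{k,i,j}-C_{k-1,i,j}$ is an integer in $\{\max(0,i+j-n),\dots,\min(i,j)\}$; $\mathcal C_n$ is the set of these. For an array $C$ indexed by $[0,n]^3$, $\Xi^{-1}(C)$ is the array indexed by $[n]^3$ with $\Xi^{-1}(C)_{i,j,k}=C_{i,j,k}-C_{i-1,j,k}-C_{i,j-1,k}-C_{i,j,k-1}+C_{i-1,j-1,k}+C_{i-1,j,k-1}+C_{i,j-1,k-1}-C_{i-1,j-1,k-1}$. *)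

From mathcomp Require Import all_boot all_order all_algebra.
Set Implicit Arguments. Unset Strict Implicit. Unset Printing Implicit Defensive.
Import Order.TTheory GRing.Theory Num.Theory.
Local Open Scope ring_scope.

(* A 3-dimensional integer array indexed by [0,n]^3 is represented as a
   function nat -> nat -> nat -> int; only the values at indices in [0,n]
   matter for everything below. *)
Definition arr3 := nat -> nat -> nat -> int.

Definition in_range (n i j : nat) (d : int) : bool :=
  ((i + j - n)%N%:Z <= d) && (d <= (minn i j)%:Z).

Definition is_corner_sum (n : nat) (C : arr3) : Prop :=
  (forall i j : nat, (i <= n)%N -> (j <= n)%N ->
     [/\ C i j 0%N = 0, C i 0%N j = 0 & C 0%N i j = 0] /\
     [/\ C i j n = (i * j)%N%:Z, C i n j = (i * j)%N%:Z & C n i j = (i * j)%N%:Z]) /\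
  (forall i j k : nat, (i <= n)%N -> (j <= n)%N -> (1 <= k <= n)%N ->
     [/\ in_range n i j (C i j k - C i j k.-1),
         in_range n i j (C i k j - C i k.-1 j) &
         in_range n i j (C k i j - C k.-1 i j)]).

(* Xi^{-1}(C), indexed by [n]^3 (i, j, k >= 1) *)
Definition Xi_inv (C : arr3) : arr3 := fun i j k =>
  C i j k - C i.-1 j k - C i j.-1 k - C i j k.-1
  + C i.-1 j.-1 k + C i.-1 j k.-1 + C i j.-1 k.-1 - C i.-1 j.-1 k.-1.

Definition Lmat (n : nat) (A : arr3) (i j : nat) : int :=
  \sum_(1 <= k < n.+1) (k%:Z * A i j k).

Definition SigmaL (L : nat -> nat -> int) (i j : nat) : int :=
  \sum_(1 <= a < i.+1) \sum_(1 <= b < j.+1) L a b.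

Definition rho (n : nat) (C : arr3) : int :=
  \sum_(0 <= i < n.+1) \sum_(0 <= j < n.+1) \sum_(0 <= k < n.+1) C i j k.

From mathcomp Require Import all_boot all_order all_algebra.
From mathcomp Require Import ring zify.
Set Implicit Arguments. Unset Strict Implicit.
Import GRing.Theory Num.Theory.
Local Open Scope ring_scope.

(* Writing A_{abk} as the k-difference of the mixed (a,b)-difference of the
   layer C_{..k}, Abel summation in k turns L_{ab} into n times the top layer
   minus the sum of the lower layers, and summing over a <= i, b <= j
   telescopes the mixed differences back to C.  Since C vanishes on the faces
   a = 0 and b = 0, Sigma(L)_{ij} = n C_{ijn} - sum_{k<n} C_{ijk}; adding rho(C)
   leaves (n+1) sum_{i,j} C_{ijn} = (n+1) sum_{i,j} ij = (n+1) (n(n+1)/2)^2.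
   Only the boundary values of C are used, not the range conditions. *)

Section Telescoping.
Variable V : zmodType.

Lemma sum_nat_diff_pred (f : nat -> V) m :
  \sum_(1 <= k < m.+1) (f k - f k.-1) = f m - f 0%N.
Proof. by rewrite big_add1 /= telescope_sumr. Qed.

Definition mixed_diff (h : nat -> nat -> V) a b :=
  (h a b - h a.-1 b) - (h a b.-1 - h a.-1 b.-1).

Lemma sum_mixed_diff (h : nat -> nat -> V) i j :
  \sum_(1 <= a < i.+1) \sum_(1 <= b < j.+1) mixed_diff h a b
  = (h i j - h 0%N j) - (h i 0%N - h 0%N 0%N).
Proof.
rewrite -(sum_nat_diff_pred (h^~ j)) -(sum_nat_diff_pred (h^~ 0%N)) -sumrB.
by apply: eq_bigr => a _; apply: (sum_nat_diff_pred (fun b => h a b - h a.-1 b)).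
Qed.

End Telescoping.

Lemma sum_nat_mul_diff_pred (R : comPzRingType) (g : nat -> R) m :
  \sum_(1 <= k < m.+1) (k%:R * (g k - g k.-1))
  = m%:R * g m - \sum_(0 <= k < m) g k.
Proof.
elim: m => [|m IH]; first by rewrite !big_geq // mul0r subrr.
by rewrite big_nat_recr //= IH big_nat_recr //= -addn1 natrD; ring.
Qed.

Lemma double_sum_nat (R : pzSemiRingType) n :
  2 * \sum_(1 <= i < n.+1) (i%:R : R) = (n * n.+1)%:R.
Proof.
elim: n => [|n IH]; first by rewrite big_geq // mulr0.
by rewrite big_nat_recr //= mulrDr IH -natrM -natrD; congr _%:R; lia.
Qed.

Definition layer (C : arr3) k a b := C a b k.

Lemma Xi_inv_diff (C : arr3) a b k :
  Xi_inv C a b k = mixed_diff (layer C k) a b - mixed_diff (layer C k.-1) a b.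
Proof. by rewrite /Xi_inv /mixed_diff /layer; ring. Qed.

Lemma Lmat_Xi_inv n (C : arr3) a b :
  Lmat n (Xi_inv C) a b
  = n%:Z * mixed_diff (layer C n) a b - \sum_(0 <= k < n) mixed_diff (layer C k) a b.
Proof.
rewrite -natz -(sum_nat_mul_diff_pred (fun k => mixed_diff (layer C k) a b)).
by apply: eq_bigr => k _; rewrite natz Xi_inv_diff.
Qed.

Section FacesVanish.
Variables (n : nat) (C : arr3).
Hypothesis C_face1 : forall j k, (j <= n)%N -> (k <= n)%N -> C 0%N j k = 0.
Hypothesis C_face2 : forall i k, (i <= n)%N -> (k <= n)%N -> C i 0%N k = 0.

Lemma sum_mixed_diff_layer i j k : (i <= n)%N -> (j <= n)%N -> (k <= n)%N ->
  \sum_(1 <= a < i.+1) \sum_(1 <= b < j.+1) mixed_diff (layer C k) a b = C i j k.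
Proof.
by move=> Hi Hj Hk; rewrite sum_mixed_diff /layer !C_face1 // C_face2 // !subr0.
Qed.

Lemma SigmaL_Xi_inv i j : (i <= n)%N -> (j <= n)%N ->
  SigmaL (Lmat n (Xi_inv C)) i j = n%:Z * C i j n - \sum_(0 <= k < n) C i j k.
Proof.
move=> Hi Hj; rewrite /SigmaL.
under eq_bigr => a _ do under eq_bigr => b _ do rewrite Lmat_Xi_inv.
under eq_bigr => a _ do rewrite sumrB -mulr_sumr.
rewrite sumrB -mulr_sumr sum_mixed_diff_layer //.
under eq_bigr => a _ do rewrite exchange_big /=.
rewrite exchange_big /=.
by under eq_big_nat => k /andP[_ Hk] do rewrite sum_mixed_diff_layer ?(ltnW Hk) //.
Qed.

Lemma rho_interior :
  rho n C = \sum_(1 <= i < n.+1) \sum_(1 <= j < n.+1) \sum_(0 <= k < n.+1) C i j k.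
Proof.
have face1 : \sum_(0 <= j < n.+1) \sum_(0 <= k < n.+1) C 0%N j k = 0.
  rewrite big_nat big1 // => j /andP[_ Hj].
  by rewrite big_nat big1 // => k /andP[_ Hk]; rewrite C_face1.
rewrite /rho big_ltn // face1 add0r; apply: eq_big_nat => i /andP[_ Hi].
have face2 : \sum_(0 <= k < n.+1) C i 0%N k = 0.
  by rewrite big_nat big1 // => k /andP[_ Hk]; rewrite C_face2.
by rewrite big_ltn // face2 add0r.
Qed.

Lemma rho_add_sum_SigmaL :
  rho n C + \sum_(1 <= i < n.+1) \sum_(1 <= j < n.+1) SigmaL (Lmat n (Xi_inv C)) i j
  = n.+1%:Z * \sum_(1 <= i < n.+1) \sum_(1 <= j < n.+1) C i j n.
Proof.
rewrite rho_interior -big_split mulr_sumr; apply: eq_big_nat => i /andP[_ Hi].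
rewrite -big_split mulr_sumr; apply: eq_big_nat => j /andP[_ Hj].
by rewrite SigmaL_Xi_inv // big_nat_recr //= -addn1 PoszD; ring.
Qed.

End FacesVanish.

Theorem mainTheorem14 (n : nat) (C : arr3) :
  is_corner_sum n C ->
  ((rho n C + \sum_(1 <= i < n.+1) \sum_(1 <= j < n.+1)
                 SigmaL (Lmat n (Xi_inv C)) i j)%:~R : rat)
  = ((n ^ 2 * n.+1 ^ 3)%N%:R / 4%:R : rat).
Proof.
move=> [C_bd _].
have C_face1 j k : (j <= n)%N -> (k <= n)%N -> C 0%N j k = 0.
  by move=> Hj Hk; have [[_ _ ->] _] := C_bd j k Hj Hk.
have C_face2 i k : (i <= n)%N -> (k <= n)%N -> C i 0%N k = 0.
  by move=> Hi Hk; have [[_ ->] _] := C_bd i k Hi Hk.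
have C_top i j : (i <= n)%N -> (j <= n)%N -> C i j n = i%:Z * j%:Z.
  by move=> Hi Hj; have [_ [-> _]] := C_bd i j Hi Hj.
set s := \sum_(1 <= i < n.+1) (i%:R : int).
have top_sum : \sum_(1 <= i < n.+1) \sum_(1 <= j < n.+1) C i j n = s * s.
  rewrite big_distrlr; apply: eq_big_nat => i /andP[_ Hi].
  by apply: eq_big_nat => j /andP[_ Hj]; rewrite C_top // -!natz.
have four_times : 4 * (n.+1%:Z * (s * s)) = (n ^ 2 * n.+1 ^ 3)%N%:Z.
  have -> : 4 * (n.+1%:Z * (s * s)) = n.+1%:Z * ((2 * s) * (2 * s)) by ring.
  by rewrite double_sum_nat -!natz -!natrM; congr _%:R; rewrite !expnS expn0; ring.
rewrite rho_add_sum_SigmaL // top_sum.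
have -> : ((n ^ 2 * n.+1 ^ 3)%N%:R : rat) = (4 * (n.+1%:Z * (s * s)))%:~R.
  by rewrite four_times.
by rewrite intrM; field.
Qed.
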